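(* Let $n\in\mathbb{N}$, $\boldsymbol{A}\in\mathbb{R}^{n\times n}$, $\boldsymbol{b}\in\mathbb{R}^n$ with $(\boldsymbol{A},\boldsymbol{b})$ controllable, and $g:\mathbb{R}^n\to\mathbb{R}$ with $g(\boldsymbol{0})\neq 0$. Let $\mathcal{X}=\bigcup_{i=1}^s\mathcal{X}_i\subset\mathbb{R}^n$ with $s\in\mathbb{N}$ and each $\mathcal{X}_i$ convex, such that for every $i$ either ($g\ge 0$ on $\mathcal{X}_i$ and $g$ concave on $\mathcal{X}_i$) or ($g\le 0$ on $\mathcal{X}_i$ and $g$ convex on $\mathcal{X}_i$); assume $\boldsymbol{0}\in\mathrm{int}(\mathcal{X}_1)$ and $\mathcal{U}=[\underline{u},\overline{u}]$ with $\underline{u}<0<\overline{u}$. Let $\boldsymbol{c}\in\mathbb{R}^n$ satisfy $\boldsymbol{c}^\top\boldsymbol{A}^{i}\boldsymbol{b}=0$ for $i\in\{0,\dots,n-2\}$ and $\boldsymbol{c}^\top\boldsymbol{A}^{n-1}\boldsymbol{b}\neq0$, let $b_0\neq0$, $a_0,\dots,a_{n-1}\in\mathbb{R}$, $\beta:=\boldsymbol{c}^\top\boldsymbol{A}^{n-1}\boldsymbol{b}$, $\boldsymbol{\alpha}^\top:=\boldsymbol{c}^\top(\boldsymbol{A}^n+\sum_{i=0}^{n-1}a_i\boldsymbol{A}^i)$. Let $\hat\ell:\mathbb{R}^n\times\mathbb{R}\to\mathbb{R}$ be positive definite, and define $\ell:\mathbb{R}^n\times\mathbb{R}\to\mathbb{R}$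 by $$\ell(\boldsymbol{x},u):=\hat\ell\Big(\boldsymbol{x},\frac{\beta g(\boldsymbol{x})u+\boldsymbol{\alpha}^\top\boldsymbol{x}}{b_0}\Big).$$ Then $\ell$ is positive definite.
   Context: A function $F:\mathbb{R}^n\times\mathbb{R}\to\mathbb{R}$ is called positive definite if $F(\boldsymbol{0},0)=0$ and $F(\boldsymbol{x},w)>0$ for all $(\boldsymbol{x},w)\neq(\boldsymbol{0},0)$. Here $\hat\ell$ is a stage cost in terms of the state and an artificial input $v$ of the exactly linearized version of the system $\boldsymbol{x}(k+1)=\boldsymbol{A}\boldsymbol{x}(k)+g(\boldsymbol{x}(k))\boldsymbol{b}\,u(k)$, and $\ell$ is the induced stage cost in terms of the original input $u$. *)

From HB Require Import structures.
From mathcomp Require Import all_boot all_order all_algebra.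
From mathcomp Require Import all_classical all_reals all_analysis.
Set Implicit Arguments. Unset Strict Implicit. Unset Printing Implicit Defensive.
Import Order.TTheory GRing.Theory Num.Theory.
Import numFieldNormedType.Exports.
Local Open Scope classical_set_scope.
Local Open Scope ring_scope.

Section Defs.
Variables (R : realType) (n : nat).

Definition ctrb_mx (A : 'M[R]_n) (b : 'cV[R]_n) : 'M[R]_n :=
  \matrix_(i < n, j < n) (A ^+ j *m b) i ord0.

Definition controllable (A : 'M[R]_n) (b : 'cV[R]_n) : Prop :=
  \rank (ctrb_mx A b) = n.

Definition convex_subset (X : set 'cV[R]_n) : Prop :=
  forall x y t, X x -> X y -> 0 <= t <= 1 -> X (t *: x + (1 - t) *: y).

Definition concave_on (X : set 'cV[R]_n) (g : 'cV[R]_n -> R) : Prop :=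
  forall x y t, X x -> X y -> 0 <= t <= 1 ->
    t * g x + (1 - t) * g y <= g (t *: x + (1 - t) *: y).

Definition convex_on (X : set 'cV[R]_n) (g : 'cV[R]_n -> R) : Prop :=
  forall x y t, X x -> X y -> 0 <= t <= 1 ->
    g (t *: x + (1 - t) *: y) <= t * g x + (1 - t) * g y.

Definition pos_def (F : 'cV[R]_n -> R -> R) : Prop :=
  F 0 0 = 0 /\ forall x w, (x, w) != (0, 0) -> 0 < F x w.

Definition beta_of (A : 'M[R]_n) (b c : 'cV[R]_n) : R :=
  (c^T *m A ^+ n.-1 *m b) ord0 ord0.

Definition alpha_of (A : 'M[R]_n) (c : 'cV[R]_n) (a : 'I_n -> R) : 'rV[R]_n :=
  c^T *m (A ^+ n + \sum_(i < n) a i *: A ^+ i).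

Definition induced_cost (A : 'M[R]_n) (b c : 'cV[R]_n) (a : 'I_n -> R) (b0 : R)
  (g : 'cV[R]_n -> R) (lhat : 'cV[R]_n -> R -> R) : 'cV[R]_n -> R -> R :=
  fun x u => lhat x ((beta_of A b c * g x * u + (alpha_of A c a *m x) ord0 ord0) / b0).

End Defs.

From HB Require Import structures.
From mathcomp Require Import all_boot all_order all_algebra.
From mathcomp Require Import all_classical all_reals all_analysis.
Set Implicit Arguments. Unset Strict Implicit. Unset Printing Implicit Defensive.
Import Order.TTheory GRing.Theory Num.Theory.
Import numFieldNormedType.Exports.
Local Open Scope classical_set_scope.
Local Open Scope ring_scope.

(* Away from the origin the pair (x, v) is nonzero because x is; at x = 0 the
   artificial input reduces to beta g(0) u / b0, a product of nonzero factors
   whenever u is nonzero. *)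

Section PosDefReparam.
Variables (R : realType) (n : nat).

Lemma pos_def_reparam (F : 'cV[R]_n -> R -> R) (phi : 'cV[R]_n -> R -> R) :
  pos_def F -> phi 0 0 = 0 -> (forall u, u != 0 -> phi 0 u != 0) ->
  pos_def (fun x u => F x (phi x u)).
Proof.
move=> [F00 Fpos] phi00 phi0_neq0; split; first by rewrite phi00.
move=> x u; have [-> | x_neq0] := eqVneq x 0; last first.
  by move=> _; apply: Fpos; rewrite xpair_eqE (negbTE x_neq0).
rewrite xpair_eqE eqxx /= => u_neq0.
by apply: Fpos; rewrite xpair_eqE eqxx /= phi0_neq0.
Qed.

End PosDefReparam.

Section InducedInput.
Variables (R : realType) (n : nat) (A : 'M[R]_n) (b c : 'cV[R]_n).
Variables (a : 'I_n -> R) (b0 : R) (g : 'cV[R]_n -> R).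

Definition induced_input (x : 'cV[R]_n) (u : R) : R :=
  (beta_of A b c * g x * u + (alpha_of A c a *m x) ord0 ord0) / b0.

Lemma induced_input0x (u : R) :
  induced_input 0 u = beta_of A b c * g 0 * u / b0.
Proof. by rewrite /induced_input mulmx0 mxE addr0. Qed.

Lemma induced_input00 : induced_input 0 0 = 0.
Proof. by rewrite induced_input0x mulr0 mul0r. Qed.

Lemma induced_input0x_neq0 (u : R) :
  beta_of A b c != 0 -> g 0 != 0 -> b0 != 0 -> u != 0 ->
  induced_input 0 u != 0.
Proof.
move=> beta_neq0 g0_neq0 b0_neq0 u_neq0.
by rewrite induced_input0x !mulf_neq0 ?invr_eq0.
Qed.

End InducedInput.

Theorem proposition1 (R : realType) (n : nat) (A : 'M[R]_n) (b : 'cV[R]_n)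
  (g : 'cV[R]_n -> R) (s : nat) (X : nat -> set 'cV[R]_n) (calX : set 'cV[R]_n)
  (ulo uhi : R) (c : 'cV[R]_n) (b0 : R) (a : 'I_n -> R)
  (lhat : 'cV[R]_n -> R -> R) :
  controllable A b ->
  g 0 != 0 ->
  (0 < s)%N ->
  calX = \bigcup_(i in [set i | (i < s)%N]) X i ->
  (forall i, (i < s)%N -> convex_subset (X i)) ->
  (forall i, (i < s)%N ->
     ((forall x, X i x -> 0 <= g x) /\ concave_on (X i) g) \/
     ((forall x, X i x -> g x <= 0) /\ convex_on (X i) g)) ->
  interior (X 0%N) 0 ->
  ulo < 0 < uhi ->
  (forall i, (i.+1 < n)%N -> (c^T *m A ^+ i *m b) ord0 ord0 = 0) ->
  (c^T *m A ^+ n.-1 *m b) ord0 ord0 != 0 ->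
  b0 != 0 ->
  pos_def lhat ->
  pos_def (induced_cost A b c a b0 g lhat).
Proof.
move=> _ g0_neq0 _ _ _ _ _ _ _ beta_neq0 b0_neq0 lhat_pd.
apply: (pos_def_reparam (phi := induced_input A b c a b0 g)) => //.
  exact: induced_input00.
by move=> u; apply: induced_input0x_neq0.
Qed.
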